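(* Let $\mathcal{H}_A,\mathcal{H}_B$ be complex Hilbert spaces of equal finite dimension $N$, let $\mathcal{H}_{AB}=\mathcal{H}_A\otimes\mathcal{H}_B$, let $0\le s\le\log N$, and let $\mathcal{E}=\mathcal{E}_A\otimes\mathcal{E}_B$ be a product of quantum channels (CPTP maps) $\mathcal{E}_A$ on $\mathcal{H}_A$ and $\mathcal{E}_B$ on $\mathcal{H}_B$. Then the optimal (smallest) privacy parameter $\varepsilon^*(s)$ for which $\mathcal{E}$ is ECLM-$\varepsilon$-QLDP on $\mathbb{H}_s$ is $$\varepsilon^*(s)=\log \max_{\ket{\phi_a}\in\mathcal{H}_A}\ \max_{\ket{\phi_b}\in\mathcal{H}_B}\ \frac{J_{\max}(\mathcal{K}_\phi,s)}{J_{\min}(\mathcal{K}_\phi,s)},$$ where the maxima range over unit vectors, $\mathcal{K}_\phi=\mathcal{E}_A^\dagger(\ket{\phi_a}\bra{\phi_a})\otimes\mathcal{E}_B^\dagger(\ket{\phi_b}\bra{\phi_b})$, and the ratio is interpreted as $+\infty$ (so $\varepsilon^*(s)=+\infty$, i.e. no finite $\varepsilon$ works) when the denominator vanishes and the numerator is positive.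
   Context: Entanglement entropy: for a unit vector $\ket{\psi}\in\mathcal{H}_{AB}$ with Schmidt decomposition $\ket{\psi}=\sum_j\sqrt{\lambda_j}\ket{j_A}\otimes\ket{j_B}$, $\mathbf{E}(\psi)=-\sum_j\lambda_j\log\lambda_j$ (the von Neumann entropy of the reduced state $\operatorname{Tr}_B\ket{\psi}\bra{\psi}$). The entanglement-constrained domain is $\mathbb{H}_s=\{\rho=\ket{\psi}\bra{\psi}:\ \ket{\psi}\in\mathcal{H}_{AB}\text{ unit},\ \mathbf{E}(\psi)\ge s\}$; pure states are identified with their rank-one density operators. $\mathcal{E}^\dagger$ denotes the Hilbert–Schmidt adjoint of a channel, so $\operatorname{Tr}(M\,\mathcal{E}(\rho))=\operatorname{Tr}(\mathcal{E}^\dagger(M)\rho)$. A local measurement (LM) adversary is a product POVM $\{\mathcal{M}_a\otimes\mathcal{M}_b\}_{(a,b)\in O_A\times O_B}$, where $\{\mathcal{M}_a\}_{a\in O_A}$ and $\{\mathcal{M}_b\}_{b\in O_B}$ are finite POVMs on $\mathcal{H}_A$ and $\mathcal{H}_B$; the outcome distribution on input $\rho$ is $\Pr[(a,b)]=\operatorname{Tr}((\mathcal{M}_a\otimes\mathcal{M}_b)\mathcal{E}(\rho))$. The mechanism $\mathcal{E}$ is ECLM-$\varepsilon$-QLDP on $\mathbb{H}_s$ if for every LM adversary $\mathcal{M}$, every $\rho,\rho'\in\mathbb{H}_s$ and every $T\subseteq O_A\times O_B$: $\Pr[\mathcal{M}(\mathcal{E}(\rho))\in T]\le e^{\varepsilon}\Pr[\mathcal{M}(\mathcal{E}(\rho'))\in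 T]$. For a positive semidefinite operator $\mathcal{K}$ on $\mathcal{H}_{AB}$: $J_{\max}(\mathcal{K},s)=\max_{\ket{\psi}\bra{\psi}\in\mathbb{H}_s}\bra{\psi}\mathcal{K}\ket{\psi}$ and $J_{\min}(\mathcal{K},s)=\min_{\ket{\psi}\bra{\psi}\in\mathbb{H}_s}\bra{\psi}\mathcal{K}\ket{\psi}$. *)

From HB Require Import structures.
From mathcomp Require Import all_boot all_order all_algebra.
From mathcomp Require Import all_classical all_reals.
From mathcomp Require Import ereal sequences exp.
From mathcomp Require Import complex mxtens.

Set Implicit Arguments.
Unset Strict Implicit.
Unset Printing Implicit Defensive.

Import Order.TTheory GRing.Theory Num.Theory.
Local Open Scope ring_scope.

Section Quantum.
Variable R : realType.
Local Notation C := (R[i]).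

Definition adjmx m n (A : 'M[C]_(m, n)) : 'M[C]_(n, m) := (map_mx (@conjc R) A)^T.

Definition psd n (M : 'M[C]_n) : Prop :=
  adjmx M = M /\ forall v : 'cV[C]_n, 0 <= (adjmx v *m M *m v) 0 0.

Definition unit_vec n (v : 'cV[C]_n) : Prop := (adjmx v *m v) 0 0 = 1.

Definition unitary n (U : 'M[C]_n) : Prop := adjmx U *m U = 1%:M.

Definition proj n (v : 'cV[C]_n) : 'M[C]_n := v *m adjmx v.

Definition lin_map N (E : 'M[C]_N -> 'M[C]_N) : Prop :=
  forall (a : C) (X Y : 'M[C]_N), E (a *: X + Y) = a *: E X + E Y.

Definition blk k N (X : 'M[C]_(k * N)) (i j : 'I_k) : 'M[C]_N :=
  \matrix_(p, q) X (mxtens_index (i, p)) (mxtens_index (j, q)).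

Definition ampl k N (E : 'M[C]_N -> 'M[C]_N) (X : 'M[C]_(k * N)) : 'M[C]_(k * N) :=
  \sum_(i < k) \sum_(j < k) (delta_mx i j *t E (blk X i j)).

Definition CP N (E : 'M[C]_N -> 'M[C]_N) : Prop :=
  forall (k : nat) (X : 'M[C]_(k * N)), psd X -> psd (ampl E X).

Definition TP N (E : 'M[C]_N -> 'M[C]_N) : Prop := forall X, \tr (E X) = \tr X.

Definition channel N (E : 'M[C]_N -> 'M[C]_N) : Prop := [/\ lin_map E, CP E & TP E].

(* the product channel E_A (x) E_B on H_A (x) H_B, defined by linearity from
   (E_A (x) E_B)(|i><j| (x) |k><l|) = E_A(|i><j|) (x) E_B(|k><l|) *)
Definition prod_chan N (EA EB : 'M[C]_N -> 'M[C]_N) (X : 'M[C]_(N * N)) : 'M[C]_(N * N) :=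
  \sum_(i < N) \sum_(j < N) \sum_(k < N) \sum_(l < N)
    X (mxtens_index (i, k)) (mxtens_index (j, l)) *:
      (EA (delta_mx i j) *t EB (delta_mx k l)).

(* Hilbert-Schmidt adjoint: Tr (M E(rho)) = Tr (E^dag(M) rho) *)
Definition hs_adj N (E : 'M[C]_N -> 'M[C]_N) (M : 'M[C]_N) : 'M[C]_N :=
  \matrix_(j, i) \tr (M *m E (delta_mx i j)).

Definition schmidt N (psi : 'cV[C]_(N * N)) (lam : 'I_N -> R) : Prop :=
  (forall j, 0 <= lam j) /\
  exists U V : 'M[C]_N, [/\ unitary U, unitary V &
    psi = \sum_(j < N) Complex (Num.sqrt (lam j)) 0 *: (col j U *t col j V)].

(* entanglement entropy E(psi) = - sum_j lam_j log lam_j (0 log 0 = 0);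
   the Schmidt coefficients are unique up to order, so this set is a singleton
   for a unit vector and sup picks its element *)
Definition ent N (psi : 'cV[C]_(N * N)) : R :=
  sup [set h | exists lam, schmidt psi lam /\ h = - \sum_(j < N) lam j * ln (lam j)].

Definition in_Hs N (s : R) (psi : 'cV[C]_(N * N)) : Prop :=
  unit_vec psi /\ s <= ent psi.

Definition povm N (O : finType) (M : O -> 'M[C]_N) : Prop :=
  (forall a, psd (M a)) /\ \sum_(a : O) M a = 1%:M.

Definition lm_prob N (E : 'M[C]_(N * N) -> 'M[C]_(N * N)) (OA OB : finType)
  (MA : OA -> 'M[C]_N) (MB : OB -> 'M[C]_N) (rho : 'M[C]_(N * N)) (ab : OA * OB) : R :=
  complex.Re (\tr ((MA ab.1 *t MB ab.2) *m E rho)).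

Definition eclm_qldp N (E : 'M[C]_(N * N) -> 'M[C]_(N * N)) (s eps : R) : Prop :=
  forall (OA OB : finType) (MA : OA -> 'M[C]_N) (MB : OB -> 'M[C]_N),
    povm MA -> povm MB ->
    forall psi psi' : 'cV[C]_(N * N), in_Hs s psi -> in_Hs s psi' ->
    forall T : {set OA * OB},
      \sum_(ab in T) lm_prob E MA MB (proj psi) ab <=
      expR eps * \sum_(ab in T) lm_prob E MA MB (proj psi') ab.

Definition eps_star N (E : 'M[C]_(N * N) -> 'M[C]_(N * N)) (s : R) : \bar R :=
  ereal_inf [set (eps%:E)%E | eps in [set eps : R | eclm_qldp E s eps]].

Definition Jmax N (K : 'M[C]_(N * N)) (s : R) : R :=
  sup [set complex.Re ((adjmx psi *m K *m psi) 0 0) | psi in [set psi | in_Hs s psi]].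
Definition Jmin N (K : 'M[C]_(N * N)) (s : R) : R :=
  inf [set complex.Re ((adjmx psi *m K *m psi) 0 0) | psi in [set psi | in_Hs s psi]].

(* log (J_max / J_min) with the convention: +oo if J_min = 0 < J_max;
   the degenerate case K_phi = 0 (0/0) is given the value 0 (it never
   constrains the privacy parameter) *)
Definition log_ratio (jmax jmin : R) : \bar R :=
  if 0 < jmin then (ln (jmax / jmin))%:E
  else if 0 < jmax then +oo%E else 0%E.

Definition K_phi N (EA EB : 'M[C]_N -> 'M[C]_N) (pa pb : 'cV[C]_N) : 'M[C]_(N * N) :=
  hs_adj EA (proj pa) *t hs_adj EB (proj pb).

Definition eps_formula N (EA EB : 'M[C]_N -> 'M[C]_N) (s : R) : \bar R :=
  ereal_sup [set log_ratio (Jmax (K_phi EA EB pa pb) s) (Jmin (K_phi EA EB pa pb) s)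
            | pa in [set pa : 'cV[C]_N | unit_vec pa] & pb in [set pb : 'cV[C]_N | unit_vec pb]].

End Quantum.

From Pilot Require Import Defs.
From HB Require Import structures.
From mathcomp Require Import all_boot all_order all_algebra.
From mathcomp Require Import all_classical all_reals.
From mathcomp Require Import ereal sequences exp.
From mathcomp Require Import complex mxtens spectral lra.
Import Order.TTheory GRing.Theory Num.Theory.
Local Open Scope ring_scope.

(** By Hilbert-Schmidt duality, the probability of the outcome (a, b) of a
   product POVM on (E_A (x) E_B)(|psi><psi|) is <psi| E_A^dag(M_a) (x)
   E_B^dag(M_b) |psi>.  Decomposing M_a and M_b spectrally writes this operator
   as a nonnegative combination of the operators K_phi, so the privacy
   inequality for every local measurement and every event follows from
   <psi|K_phi|psi> <= e^eps <psi'|K_phi|psi'> for all unit phi_a, phi_b and all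
   psi, psi' in H_s.  Conversely the two-outcome POVMs {|phi><phi|, 1 - |phi><phi|}
   realise every K_phi, and the trivial POVM forces eps >= 0.  Taking the
   supremum over psi and the infimum over psi' turns the pointwise condition
   into J_max(K_phi, s) <= e^eps J_min(K_phi, s), i.e. into
   log (J_max / J_min) <= eps.  The set H_s is nonempty for s <= log N because
   the maximally entangled state has entanglement entropy log N. *)

Set Implicit Arguments.
Unset Strict Implicit.
Unset Printing Implicit Defensive.

Section Quantum.
Variable R : realType.
Local Notation C := (R[i]).
Local Notation proj := Defs.proj.
Local Notation schmidt := Defs.schmidt.

Lemma Re_sum I (r : seq I) (P : pred I) (F : I -> C) :
  complex.Re (\sum_(i <- r | P i) F i) = \sum_(i <- r | P i) complex.Re (F i).
Proof. exact: (@raddf_sum _ _ (@complex.Re R : Rcomplex R -> R)). Qed.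

Lemma ImD (x y : C) : complex.Im (x + y) = complex.Im x + complex.Im y.
Proof. exact: (@raddfD _ _ (@complex.Im R : Rcomplex R -> R)). Qed.

Lemma ImM (x y : C) :
  complex.Im (x * y) = complex.Re x * complex.Im y + complex.Im x * complex.Re y.
Proof. by case: x => a b; case: y. Qed.

Lemma ReM_Im0 (x y : C) :
  complex.Im x = 0 -> complex.Re (x * y) = complex.Re x * complex.Re y.
Proof. by case: x => a b; case: y => c d /= ->; rewrite mul0r subr0. Qed.

Lemma Re_ge0 (x : C) : 0 <= x -> 0 <= complex.Re x.
Proof. by rewrite lecE => /andP[]. Qed.

Lemma ler_Re (x y : C) : x <= y -> complex.Re x <= complex.Re y.
Proof. by rewrite lecE => /andP[]. Qed.

Lemma adjmxE m n (A : 'M[C]_(m, n)) i j : adjmx A i j = conjc (A j i).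
Proof. by rewrite !mxE. Qed.

Lemma adjmxK m n (A : 'M[C]_(m, n)) : adjmx (adjmx A) = A.
Proof. by apply/matrixP=> i j; rewrite !adjmxE conjcK. Qed.

Lemma adjmxM m n p (A : 'M[C]_(m, n)) (B : 'M[C]_(n, p)) :
  adjmx (A *m B) = adjmx B *m adjmx A.
Proof.
apply/matrixP=> i j; rewrite !mxE rmorph_sum; apply: eq_bigr => k _.
by rewrite !mxE rmorphM mulrC.
Qed.

Lemma adjmxD m n (A B : 'M[C]_(m, n)) : adjmx (A + B) = adjmx A + adjmx B.
Proof. by apply/matrixP=> i j; rewrite !mxE rmorphD. Qed.

Lemma adjmxN m n (A : 'M[C]_(m, n)) : adjmx (- A) = - adjmx A.
Proof. by apply/matrixP=> i j; rewrite !mxE rmorphN. Qed.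

Lemma adjmxZ m n a (A : 'M[C]_(m, n)) : adjmx (a *: A) = conjc a *: adjmx A.
Proof. by apply/matrixP=> i j; rewrite !mxE rmorphM. Qed.

Lemma adjmx1 n : adjmx (1%:M : 'M[C]_n) = 1%:M.
Proof. by apply/matrixP=> i j; rewrite !mxE rmorph_nat eq_sym. Qed.

Lemma adjmx_delta m n (i : 'I_m) (j : 'I_n) :
  adjmx (delta_mx i j : 'M[C]_(m, n)) = delta_mx j i.
Proof. by apply/matrixP=> a b; rewrite !mxE rmorph_nat andbC. Qed.

Lemma adjmx_tens m n p q (A : 'M[C]_(m, n)) (B : 'M[C]_(p, q)) :
  adjmx (A *t B) = adjmx A *t adjmx B.
Proof. by apply/matrixP=> i j; rewrite !mxE rmorphM. Qed.

Lemma adjmx_conjT m n (A : 'M[C]_(m, n)) : adjmx A = (A ^t*)%sesqui.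
Proof. by apply/matrixP=> i j; rewrite !mxE. Qed.

Lemma adjmx_proj n (v : 'cV[C]_n) : adjmx (proj v) = proj v.
Proof. by rewrite /proj adjmxM adjmxK. Qed.

Definition sform n (A : 'M[C]_n) (u v : 'cV[C]_n) : C := (adjmx u *m A *m v) 0 0.
Definition qform n (A : 'M[C]_n) (v : 'cV[C]_n) : C := sform A v v.

Lemma qformE n (A : 'M[C]_n) v :
  qform A v = \sum_i \sum_j conjc (v i 0) * A i j * v j 0.
Proof.
rewrite /qform /sform mxE exchange_big /=; apply: eq_bigr => j _.
by rewrite mxE mulr_suml; apply: eq_bigr => i _; rewrite !mxE.
Qed.

Lemma qformD n (A B : 'M[C]_n) v : qform (A + B) v = qform A v + qform B v.
Proof. by rewrite /qform /sform mulmxDr mulmxDl mxE. Qed.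

Lemma qformZ n a (A : 'M[C]_n) v : qform (a *: A) v = a * qform A v.
Proof. by rewrite /qform /sform -scalemxAr -scalemxAl mxE. Qed.

Lemma qformN n (A : 'M[C]_n) v : qform (- A) v = - qform A v.
Proof. by rewrite -scaleN1r qformZ mulN1r. Qed.

Lemma qform_sum n I (r : seq I) (P : pred I) (F : I -> 'M[C]_n) v :
  qform (\sum_(i <- r | P i) F i) v = \sum_(i <- r | P i) qform (F i) v.
Proof.
apply: (big_morph _ (fun A B => qformD A B v)).
by rewrite /qform /sform mulmx0 mul0mx mxE.
Qed.

Lemma qform_addv n (A : 'M[C]_n) u v :
  qform A (u + v) = qform A u + sform A u v + sform A v u + qform A v.
Proof.
have mxD (X Y : 'M[C]_1) : (X + Y) 0 0 = X 0 0 + Y 0 0 by rewrite mxE.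
by rewrite /qform /sform adjmxD !mulmxDl !mulmxDr !mxD !addrA.
Qed.

Lemma sformZr n (A : 'M[C]_n) u c v : sform A u (c *: v) = c * sform A u v.
Proof. by rewrite /sform -scalemxAr mxE. Qed.

Lemma sformZl n (A : 'M[C]_n) u c v : sform A (c *: v) u = conjc c * sform A v u.
Proof. by rewrite /sform adjmxZ -!scalemxAl mxE. Qed.

Lemma qformZv n (A : 'M[C]_n) c v : qform A (c *: v) = conjc c * c * qform A v.
Proof. by rewrite /qform sformZl sformZr mulrA. Qed.

Lemma sform_delta n (A : 'M[C]_n) i j : sform A (delta_mx i 0) (delta_mx j 0) = A i j.
Proof. by rewrite /sform adjmx_delta -rowE -colE !mxE. Qed.

Lemma qform_proj n (u v : 'cV[C]_n) :
  qform (proj u) v = (adjmx v *m u) 0 0 * (adjmx u *m v) 0 0.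
Proof.
by rewrite /qform /sform /proj !mulmxA -[_ *m adjmx u *m v]mulmxA [in LHS]mxE big_ord1.
Qed.

Lemma qform1 n (v : 'cV[C]_n) : unit_vec v -> qform 1%:M v = 1.
Proof. by rewrite /qform /sform mulmx1. Qed.

Lemma mxtrace_mulE m (A B : 'M[C]_m) : \tr (A *m B) = \sum_i \sum_j A i j * B j i.
Proof. by apply: eq_bigr => i _; rewrite mxE. Qed.

Lemma mxtrace_mul_sumr m I (r : seq I) (P : pred I) (A : 'M[C]_m) (F : I -> 'M[C]_m) :
  \tr (A *m \sum_(i <- r | P i) F i) = \sum_(i <- r | P i) \tr (A *m F i).
Proof. by rewrite mulmx_sumr raddf_sum. Qed.

Lemma mxtrace_mul_proj n (A : 'M[C]_n) v : \tr (A *m proj v) = qform A v.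
Proof. by rewrite /proj /qform /sform mulmxA mxtrace_mulC mulmxA trace_mx11. Qed.

Lemma dotmx_ge0 n (w : 'cV[C]_n) : 0 <= (adjmx w *m w) 0 0.
Proof. by rewrite mxE; apply: sumr_ge0 => k _; rewrite !mxE mulrC mulcJ_ge0. Qed.

Lemma psd_adjmx_mul m n (B : 'M[C]_(m, n)) : psd (adjmx B *m B).
Proof.
split; first by rewrite adjmxM adjmxK.
by move=> v; rewrite mulmxA -[_ *m B *m v]mulmxA -adjmxM dotmx_ge0.
Qed.

Lemma psd_proj n (v : 'cV[C]_n) : psd (proj v).
Proof. by rewrite /proj -{1}[v]adjmxK; apply: psd_adjmx_mul. Qed.

Lemma proj_idem n (v : 'cV[C]_n) : unit_vec v -> proj v *m proj v = proj v.
Proof.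
move=> hv; rewrite /proj mulmxA -[v *m adjmx v *m v]mulmxA.
by rewrite [adjmx v *m v]mx11_scalar hv mulmx1.
Qed.

Lemma psd_1proj n (v : 'cV[C]_n) : unit_vec v -> psd (1%:M - proj v).
Proof.
move=> hv; suff -> : 1%:M - proj v = adjmx (1%:M - proj v) *m (1%:M - proj v).
  exact: psd_adjmx_mul.
rewrite adjmxD adjmxN adjmx1 adjmx_proj.
by rewrite mulmxBl mul1mx mulmxBr mulmx1 proj_idem // subrr subr0.
Qed.

Lemma qform_proj_le1 n (u v : 'cV[C]_n) : unit_vec u -> unit_vec v ->
  qform (proj u) v <= 1.
Proof.
move=> hu hv; have [_ /(_ v)] := psd_1proj hu.
by rewrite -/(sform _ v v) -/(qform _ v) qformD qformN qform1 // subr_ge0.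
Qed.

(* Polarisation: the imaginary parts of the nonnegative numbers
   <e_i + e_j|A|e_i + e_j> and <e_i + i e_j|A|e_i + i e_j> vanish. *)
Lemma adjmx_qform_ge0 n (A : 'M[C]_n) : (forall v, 0 <= qform A v) -> adjmx A = A.
Proof.
move=> hA; apply/matrixP => i j; rewrite !mxE.
have qd k : qform A (delta_mx k 0) = A k k by rewrite /qform sform_delta.
have Im_diag k : complex.Im (A k k) = 0 by rewrite -qd ger0_Im.
have h1 := ger0_Im (hA (delta_mx i 0 + delta_mx j 0)).
rewrite qform_addv !sform_delta !qd !ImD !Im_diag add0r addr0 in h1.
have h2 := ger0_Im (hA (delta_mx i 0 + 'i%C *: delta_mx j 0)).
rewrite qform_addv sformZr sformZl qformZv !sform_delta !qd !ImD !ImM !Im_diag /= in h2.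
move: h1 h2; case: (A i j) => a b; case: (A j i) => c d /= h1 h2.
by apply/eqP; rewrite eq_complex /=; apply/andP; split; apply/eqP; lra.
Qed.

Lemma psd_spectral n (M : 'M[C]_n) : psd M ->
  exists d : 'I_n -> C, exists u : 'I_n -> 'cV[C]_n,
    [/\ forall i, 0 <= d i, forall i, unit_vec (u i) & M = \sum_i d i *: proj (u i)].
Proof.
move=> [hH hP].
have hN : M \is normalmx.
  by rewrite qualifE -!adjmx_conjT hH.
set P := spectralmx M; set D := spectral_diag M.
have hPP : P *m adjmx P = 1%:M by rewrite adjmx_conjT; apply/unitarymxP/spectral_unitarymx.
have eM : M = invmx P *m diag_mx D *m P by apply/orthomx_spectralP.
rewrite invmx_unitary ?spectral_unitarymx // in eM.
pose u i : 'cV[C]_n := \col_k conjc (P i k).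
have dot i j : (adjmx (u i) *m u j) 0 0 = (i == j)%:R.
  have := congr1 (fun X : 'M[C]_n => X i j) hPP; rewrite !mxE => <-.
  by apply: eq_bigr => k _; rewrite !mxE conjcK.
have eM2 : M = \sum_i D 0 i *: proj (u i).
  apply/matrixP => a b; rewrite eM summxE mul_mx_diag !mxE.
  apply: eq_bigr => k _; rewrite /proj !mxE big_ord1 !mxE conjcK.
  by rewrite mulrCA mulrA [_ * D 0 k]mulrC -mulrA.
exists (fun i => D 0 i), u; split => //; last by move=> i; rewrite /unit_vec dot eqxx.
move=> i; suff <- : qform M (u i) = D 0 i by apply: hP.
rewrite {1}eM2 qform_sum (bigD1 i) //= big1 ?addr0.
  by rewrite qformZ qform_proj !dot eqxx !mulr1.
by move=> j /negbTE nji; rewrite qformZ qform_proj dot eq_sym nji mul0r mulr0.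
Qed.

Lemma sum_mxtens_index (V : nmodType) m n (F : 'I_(m * n) -> V) :
  \sum_(k < m * n) F k = \sum_(i < m) \sum_(j < n) F (mxtens_index (i, j)).
Proof.
rewrite pair_big /= (reindex (@mxtens_index m n)) /=; last first.
  by exists (@mxtens_unindex m n) => k _; rewrite (mxtens_indexK, mxtens_unindexK).
by apply: eq_bigr => -[i j].
Qed.

Lemma mxtrace_tens m n (A : 'M[C]_m) (B : 'M[C]_n) : \tr (A *t B) = \tr A * \tr B.
Proof. by rewrite /mxtrace mulr_sum; apply: eq_bigr => k _; rewrite !mxE. Qed.

Lemma tens_mx11 (A B : 'M[C]_1) : (A *t B : 'M_(1 * 1)) 0 0 = A 0 0 * B 0 0.
Proof.
by rewrite [in LHS]mxE; case: (mxtens_unindex _) => a b /=; rewrite (ord1 a) (ord1 b).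
Qed.

Lemma tens1mx m n : (1%:M : 'M[C]_m) *t (1%:M : 'M[C]_n) = 1%:M.
Proof.
apply/matrixP => a b.
case: (mxtens_indexP a) => i j; case: (mxtens_indexP b) => k l.
rewrite tensmxE !mxE -natrM mulnb.
by rewrite (inj_eq (can_inj (@mxtens_indexK m n))) xpair_eqE.
Qed.

Lemma tensmxZl m n p q a (A : 'M[C]_(m, n)) (B : 'M[C]_(p, q)) :
  (a *: A) *t B = a *: (A *t B).
Proof. by apply/matrixP=> i j; rewrite !mxE mulrA. Qed.

Lemma tensmxZr m n p q a (A : 'M[C]_(m, n)) (B : 'M[C]_(p, q)) :
  A *t (a *: B) = a *: (A *t B).
Proof. by apply/matrixP=> i j; rewrite !mxE mulrCA. Qed.

Lemma tensmx_suml m n p q I (r : seq I) (F : I -> 'M[C]_(m, n)) (B : 'M[C]_(p, q)) :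
  (\sum_(i <- r) F i) *t B = \sum_(i <- r) (F i *t B).
Proof.
apply/matrixP=> a b; rewrite !mxE !summxE mulr_suml.
by apply: eq_bigr => i _; rewrite !mxE.
Qed.

Lemma tensmx_sumr m n p q I (r : seq I) (A : 'M[C]_(m, n)) (F : I -> 'M[C]_(p, q)) :
  A *t (\sum_(i <- r) F i) = \sum_(i <- r) (A *t F i).
Proof.
apply/matrixP=> a b; rewrite !mxE !summxE mulr_sumr.
by apply: eq_bigr => i _; rewrite !mxE.
Qed.

Lemma qform_tens m n (A : 'M[C]_m) (B : 'M[C]_n) (u : 'cV[C]_m) (v : 'cV[C]_n) :
  qform (A *t B) (u *t v) = qform A u * qform B v.
Proof.
rewrite /qform /sform.
change ((adjmx (u *t v) *m (A *t B) *m (u *t v) : 'M_(1 * 1)) 0 0 =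
  qform A u * qform B v).
by rewrite adjmx_tens !tensmx_mul tens_mx11.
Qed.

Lemma proj_tens m n (u : 'cV[C]_m) (v : 'cV[C]_n) : proj (u *t v) = proj u *t proj v.
Proof.
change ((u *t v) *m adjmx (u *t v) = proj u *t proj v).
by rewrite adjmx_tens tensmx_mul.
Qed.

Lemma unit_vec_tens m n (u : 'cV[C]_m) (v : 'cV[C]_n) :
  unit_vec u -> unit_vec v -> unit_vec (u *t v).
Proof.
rewrite /unit_vec => hu hv; change ((adjmx (u *t v) *m (u *t v) : 'M_(1 * 1)) 0 0 = 1).
by rewrite adjmx_tens tensmx_mul tens_mx11 hu hv mulr1.
Qed.

Lemma unit_vec_delta n (i : 'I_n) : unit_vec (delta_mx i 0 : 'cV[C]_n).
Proof. by rewrite /unit_vec adjmx_delta mul_delta_mx mxE !eqxx. Qed.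

Lemma qform_tens_psd_bounded n (A B : 'M[C]_n) : psd A -> psd B ->
  exists b, forall v, unit_vec v -> 0 <= qform (A *t B) v <= b.
Proof.
move=> /psd_spectral [d [u [hd hu ->]]] /psd_spectral [e [w [he hw ->]]].
exists (\sum_i \sum_j d i * e j) => v hv.
have -> : (\sum_i d i *: proj (u i)) *t (\sum_j e j *: proj (w j)) =
    \sum_i \sum_j (d i * e j) *: proj (u i *t w j).
  rewrite tensmx_suml; apply: eq_bigr => i _; rewrite tensmx_sumr.
  by apply: eq_bigr => j _; rewrite tensmxZl tensmxZr scalerA proj_tens.
rewrite qform_sum; apply/andP; split.
  apply: sumr_ge0 => i _; rewrite qform_sum; apply: sumr_ge0 => j _.
  by rewrite qformZ mulr_ge0 ?mulr_ge0 //; apply: (psd_proj _).2.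
apply: ler_sum => i _; rewrite qform_sum; apply: ler_sum => j _.
rewrite qformZ -[X in _ <= X]mulr1 ler_wpM2l ?mulr_ge0 // qform_proj_le1 //.
exact: unit_vec_tens.
Qed.

Section LinearMap.
Variables (n : nat) (E : 'M[C]_n -> 'M[C]_n).
Hypothesis linE : lin_map E.

Lemma lin_map0 : E 0 = 0.
Proof.
have := linE 1 0 0; rewrite !scale1r addr0 => h.
by apply: (addrI (E 0)); rewrite addr0 -h.
Qed.

Lemma lin_mapD X Y : E (X + Y) = E X + E Y.
Proof. by have := linE 1 X Y; rewrite !scale1r. Qed.

Lemma lin_mapZ a X : E (a *: X) = a *: E X.
Proof. by have := linE a X 0; rewrite !addr0 lin_map0 addr0. Qed.

Lemma lin_map_sum I (r : seq I) (P : pred I) (F : I -> 'M[C]_n) :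
  E (\sum_(i <- r | P i) F i) = \sum_(i <- r | P i) E (F i).
Proof. exact: (big_morph _ lin_mapD lin_map0). Qed.

Lemma qform_hs_adj M v : qform (hs_adj E M) v = \tr (M *m E (proj v)).
Proof.
rewrite [proj v]matrix_sum_delta lin_map_sum mxtrace_mul_sumr qformE.
rewrite exchange_big /=; apply: eq_bigr => i _.
rewrite lin_map_sum mxtrace_mul_sumr; apply: eq_bigr => j _.
rewrite lin_mapZ -scalemxAr mxtraceZ /proj !mxE big_ord1 !mxE.
by rewrite mulrC mulrA.
Qed.

End LinearMap.

Lemma hs_adjZ n (E : 'M[C]_n -> 'M[C]_n) a M : hs_adj E (a *: M) = a *: hs_adj E M.
Proof. by apply/matrixP=> i j; rewrite !mxE -scalemxAl mxtraceZ. Qed.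

Lemma hs_adj_sum n (E : 'M[C]_n -> 'M[C]_n) I (r : seq I) (P : pred I) F :
  hs_adj E (\sum_(i <- r | P i) F i) = \sum_(i <- r | P i) hs_adj E (F i).
Proof.
apply/matrixP=> i j; rewrite !mxE summxE mulmx_suml raddf_sum.
by apply: eq_bigr => k _; rewrite mxE.
Qed.

Lemma hs_adj1 n (E : 'M[C]_n -> 'M[C]_n) : TP E -> hs_adj E 1%:M = 1%:M.
Proof.
move=> hT; apply/matrixP => i j; rewrite mxE mul1mx hT.
rewrite /mxtrace (bigD1 j) //= big1 ?addr0; first by rewrite !mxE eqxx eq_sym.
by move=> k /negbTE nk; rewrite mxE nk.
Qed.

(* A psd matrix Y on H, viewed as a block of 'M_(1 * n), is mapped by the
   amplification id_1 (x) E to |0><0| (x) E(Y). *)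
Lemma CP_qform_ge0 n (E : 'M[C]_n -> 'M[C]_n) : CP E ->
  forall Y, psd Y -> forall w, 0 <= qform (E Y) w.
Proof.
move=> hCP Y [hYh hYq] w.
pose X : 'M[C]_(1 * n) := \matrix_(a, b) Y (mxtens_unindex a).2 (mxtens_unindex b).2.
have hX : psd X.
  split; first by apply/matrixP => a b; rewrite !mxE -[in RHS]hYh !mxE.
  move=> v; rewrite -/(sform X v v) -/(qform X v) qformE sum_mxtens_index big_ord1.
  have := hYq (\col_a v (mxtens_index (0, a)) 0).
  rewrite -/(sform Y _ _) -/(qform Y _) qformE; congr (_ <= _).
  apply: eq_bigr => a _; rewrite sum_mxtens_index big_ord1.
  by apply: eq_bigr => b _; rewrite !mxE !mxtens_indexK.
have eX : ampl E X = delta_mx 0 0 *t E Y.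
  rewrite /ampl !big_ord1; congr (_ *t E _).
  by apply/matrixP => a b; rewrite !mxE !mxtens_indexK.
have [_ /(_ ((1%:M : 'M[C]_1) *t w))] := hCP 1 X hX.
rewrite -/(sform _ _ _) -/(qform _ _) eX qform_tens.
suff -> : qform (delta_mx 0 0 : 'M[C]_1) 1%:M = 1 by rewrite mul1r.
by rewrite /qform /sform adjmx1 mul1mx mulmx1 mxE.
Qed.

Lemma psd_hs_adj_proj n (E : 'M[C]_n -> 'M[C]_n) p : channel E -> psd (hs_adj E (proj p)).
Proof.
move=> [linE hCP _].
have hq v : 0 <= qform (hs_adj E (proj p)) v.
  by rewrite qform_hs_adj // mxtrace_mulC mxtrace_mul_proj; apply: CP_qform_ge0 (psd_proj v) p.
by split => //; apply: adjmx_qform_ge0.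
Qed.

Lemma mxtrace_mul_prod_chan n (EA EB : 'M[C]_n -> 'M[C]_n) (A B : 'M[C]_n) X :
  \tr ((A *t B) *m prod_chan EA EB X) = \tr ((hs_adj EA A *t hs_adj EB B) *m X).
Proof.
rewrite /prod_chan mxtrace_mul_sumr.
under eq_bigr do rewrite mxtrace_mul_sumr.
under eq_bigr do under eq_bigr do rewrite mxtrace_mul_sumr.
under eq_bigr do under eq_bigr do under eq_bigr do rewrite mxtrace_mul_sumr.
rewrite [RHS]mxtrace_mulE [RHS]sum_mxtens_index.
under [RHS]eq_bigr do under eq_bigr do rewrite sum_mxtens_index.
rewrite exchange_big /=; apply: eq_bigr => j _.
rewrite [RHS]exchange_big /=; apply: eq_bigr => i _.
rewrite [RHS]exchange_big /=; apply: eq_bigr => k _; apply: eq_bigr => l _.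
rewrite -scalemxAr mxtraceZ tensmx_mul mxtrace_tens tensmxE !mxE.
by rewrite mulrC.
Qed.

Lemma lm_prob_prod_chan n (EA EB : 'M[C]_n -> 'M[C]_n) (OA OB : finType)
  (MA : OA -> 'M[C]_n) (MB : OB -> 'M[C]_n) psi ab :
  lm_prob (prod_chan EA EB) MA MB (proj psi) ab =
  complex.Re (qform (hs_adj EA (MA ab.1) *t hs_adj EB (MB ab.2)) psi).
Proof. by rewrite /lm_prob mxtrace_mul_prod_chan mxtrace_mul_proj. Qed.

Lemma oppr_xlnx_le1 (x : R) : 0 <= x -> - (x * ln x) <= 1.
Proof.
rewrite le_eqVlt => /orP[/eqP <-|x0]; first by rewrite mul0r oppr0.
have h : - ln x <= x^-1 - 1.
  have := @le_ln1Dx R (x^-1 - 1); rewrite [1 + _]addrC subrK lnV ?posrE //; apply.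
  have : 0 < x^-1 by rewrite invr_gt0.
  lra.
rewrite -mulrN; apply: (le_trans (ler_wpM2l (ltW x0) h)).
by rewrite mulrBr mulfV ?gt_eqF // mulr1 gerBl ltW.
Qed.

(* [ent] is a supremum, hence an upper bound only because the entropies of
   Schmidt coefficient families are bounded (by the dimension). *)
Lemma ent_ge n (psi : 'cV[C]_(n * n)) lam :
  schmidt psi lam -> - \sum_(j < n) lam j * ln (lam j) <= ent psi.
Proof.
move=> hlam; apply: sup_upper_bound; last by exists lam.
split; first by exists (- \sum_(j < n) lam j * ln (lam j)), lam.
exists n%:R => _ [mu [[hmu _] ->]]; rewrite -sumrN.
apply: (@le_trans _ _ (\sum_(j < n) (1 : R))); last by rewrite sumr_const card_ord.
by apply: ler_sum => j _; apply: oppr_xlnx_le1.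
Qed.

Definition maxent n : 'cV[C]_(n * n) :=
  \sum_(j < n) Complex (Num.sqrt n%:R^-1) 0 *: (col j 1%:M *t col j 1%:M).

Lemma schmidt_maxent n : schmidt (maxent n) (fun _ => n%:R^-1).
Proof.
split; first by move=> j; rewrite invr_ge0 ler0n.
by exists 1%:M, 1%:M; split => //; rewrite /unitary adjmx1 mul1mx.
Qed.

Lemma maxentE n a b :
  maxent n (mxtens_index (a, b)) 0 = Complex (Num.sqrt n%:R^-1) 0 * (a == b)%:R.
Proof.
rewrite summxE (bigD1 a) //= big1 ?addr0.
  by rewrite mxE [in LHS]mxE mxtens_indexK /= !mxE eqxx mul1r eq_sym.
move=> j /negbTE nja; rewrite mxE [in LHS]mxE mxtens_indexK /=.
by rewrite !mxE eq_sym nja mul0r mulr0.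
Qed.

Lemma unit_vec_maxent n : (0 < n)%N -> unit_vec (maxent n).
Proof.
move=> n_gt0; rewrite /unit_vec mxE sum_mxtens_index.
pose c : C := Complex (Num.sqrt n%:R^-1) 0.
have cc : conjc c * c = ((n%:R^-1 : R)%:C)%C.
  apply/eqP; rewrite eq_complex /= oppr0 !mulr0 !mul0r subr0 addr0 eqxx andbT.
  by rewrite -expr2 sqr_sqrtr // invr_ge0 ler0n.
transitivity (\sum_(a < n) conjc c * c).
  apply: eq_bigr => a _; rewrite (bigD1 a) //= big1 ?addr0.
    by rewrite adjmxE maxentE eqxx mulr1.
  by move=> b /negbTE nba; rewrite adjmxE maxentE eq_sym nba mulr0 conjc0 mul0r.
rewrite sumr_const card_ord cc -rmorphMn /= -mulr_natr mulVf //.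
by rewrite pnatr_eq0 -lt0n.
Qed.

Lemma ent_maxent n : (0 < n)%N -> ln n%:R <= ent (maxent n).
Proof.
move=> n_gt0; apply: le_trans (ent_ge (schmidt_maxent n)).
have n0 : (0 : R) < n%:R by rewrite ltr0n.
rewrite sumr_const card_ord lnV ?posrE // mulrN mulNrn opprK -mulrnAl.
by rewrite -[n%:R^-1 *+ n]mulr_natr mulVf ?gt_eqF // mul1r.
Qed.

Lemma exists_in_Hs n (s : R) : (0 < n)%N -> s <= ln n%:R ->
  exists psi : 'cV[C]_(n * n), in_Hs s psi.
Proof.
move=> n_gt0 hs; exists (maxent n); split; first exact: unit_vec_maxent.
exact: le_trans hs (ent_maxent n_gt0).
Qed.

Lemma log_ratio_le (jmax jmin eps : R) : 0 <= jmin -> jmin <= jmax ->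
  (log_ratio jmax jmin <= eps%:E)%E <-> jmax <= expR eps * jmin /\ 0 <= eps.
Proof.
move=> jmin_ge0 jmin_le; rewrite /log_ratio.
case: ifPn => [jmin_gt0|]; last first.
  rewrite -leNgt => jmin_le0.
  have -> : jmin = 0 by apply/le_anti; rewrite jmin_le0 jmin_ge0.
  rewrite mulr0; case: ifPn => [jmax_gt0|]; last first.
    by rewrite -leNgt lee_fin => jmax_le0; split=> [|[]].
  by split => // -[jmax_le0]; move: jmax_gt0; rewrite ltNge jmax_le0.
have r_ge1 : 1 <= jmax / jmin by rewrite ler_pdivlMr // mul1r.
have le_expR : (ln (jmax / jmin) <= eps) = (jmax <= expR eps * jmin).
  by rewrite -ler_expR lnK ?posrE ?(lt_le_trans _ r_ge1) // ler_pdivrMr.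
rewrite lee_fin le_expR; split=> [h|[]//]; split=> //.
by rewrite -le_expR in h; apply: le_trans (ln_ge0 r_ge1) h.
Qed.

Lemma log_ratio_ge0 (jmax jmin : R) : 0 <= jmin -> jmin <= jmax ->
  (0%:E <= log_ratio jmax jmin)%E.
Proof.
move=> jmin_ge0 jmin_le; rewrite /log_ratio; case: ifPn => [jmin_gt0|_].
  by rewrite lee_fin ln_ge0 // ler_pdivlMr // mul1r.
by case: ifPn => _; rewrite ?leey ?lexx.
Qed.

Lemma povm_trivial n : povm (fun _ : unit => (1%:M : 'M[C]_n)).
Proof.
split; first by move=> _; rewrite -[1%:M]mul1mx -{1}adjmx1; apply: psd_adjmx_mul.
by rewrite (big_pred1 tt) // => -[].
Qed.

Lemma povm_proj n (v : 'cV[C]_n) : unit_vec v ->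
  povm (fun b : bool => if b then proj v else 1%:M - proj v).
Proof.
move=> hv; split; first by case; [apply: psd_proj | apply: psd_1proj].
by rewrite big_bool /= addrC subrK.
Qed.

Section PrivacyParameter.
Local Open Scope classical_set_scope.
Variables (N : nat) (EA EB : 'M[C]_N -> 'M[C]_N) (s : R).
Hypotheses (N_gt0 : (0 < N)%N) (s_le : s <= ln N%:R).
Hypotheses (chA : channel EA) (chB : channel EB).

Definition Kexp pa pb psi : R := complex.Re (qform (K_phi EA EB pa pb) psi).

Let Jset pa pb := [set Kexp pa pb psi | psi in [set psi | in_Hs s psi]].

Definition rank_one_qldp eps := 0 <= eps /\
  forall pa pb, unit_vec pa -> unit_vec pb ->
  forall psi psi', in_Hs s psi -> in_Hs s psi' ->
    Kexp pa pb psi <= expR eps * Kexp pa pb psi'.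

Lemma Kexp_bounded pa pb :
  exists b, forall psi, unit_vec psi -> 0 <= Kexp pa pb psi <= b.
Proof.
have [b hb] := qform_tens_psd_bounded (psd_hs_adj_proj pa chA) (psd_hs_adj_proj pb chB).
exists (complex.Re b) => psi /hb /andP[ge0 le].
by rewrite /Kexp Re_ge0 ?ler_Re.
Qed.

Lemma Jset_bounded pa pb :
  [/\ Jset pa pb !=set0, has_sup (Jset pa pb) & lbound (Jset pa pb) 0].
Proof.
have [psi hpsi] := exists_in_Hs N_gt0 s_le.
have [b hb] := Kexp_bounded pa pb.
split; first by exists (Kexp pa pb psi), psi.
  split; first by exists (Kexp pa pb psi), psi.
  by exists b => _ [p [hp _] <-]; have /andP[] := hb p hp.
by move=> _ [p [hp _] <-]; have /andP[] := hb p hp.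
Qed.

Lemma Jmin_ge0 pa pb : 0 <= Jmin (K_phi EA EB pa pb) s.
Proof. by have [ne _ lb] := Jset_bounded pa pb; apply: lb_le_inf. Qed.

Lemma Jmin_le_Jmax pa pb : Jmin (K_phi EA EB pa pb) s <= Jmax (K_phi EA EB pa pb) s.
Proof.
have [[x Jx] hs lb] := Jset_bounded pa pb.
have hl : has_lbound (Jset pa pb) by exists 0.
exact: le_trans (ge_inf hl Jx) (sup_upper_bound hs Jx).
Qed.

Lemma Kexp_le_iff_Jmax_le pa pb eps :
  (forall psi psi', in_Hs s psi -> in_Hs s psi' ->
     Kexp pa pb psi <= expR eps * Kexp pa pb psi') <->
  Jmax (K_phi EA EB pa pb) s <= expR eps * Jmin (K_phi EA EB pa pb) s.
Proof.
have [ne hs lb] := Jset_bounded pa pb.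
have hl : has_lbound (Jset pa pb) by exists 0.
have expR_gt0 := expR_gt0 eps.
split=> [h|h psi psi' hpsi hpsi'].
  apply: ge_sup => // _ [p hp <-].
  rewrite mulrC -ler_pdivrMr //; apply: lb_le_inf => // _ [q hq <-].
  by rewrite ler_pdivrMr // mulrC; apply: h.
apply: le_trans (sup_upper_bound hs _) _; first by exists psi.
apply: le_trans h _; rewrite ler_pM2l //.
by apply: ge_inf hl _ _; exists psi'.
Qed.

Lemma Re_qform_hs_adj_tens (Ma Mb : 'M[C]_N) : psd Ma -> psd Mb ->
  exists r : 'I_N -> 'I_N -> R, exists u w : 'I_N -> 'cV[C]_N,
  [/\ forall i j, 0 <= r i j, forall i, unit_vec (u i), forall j, unit_vec (w j) &
   forall psi, complex.Re (qform (hs_adj EA Ma *t hs_adj EB Mb) psi) =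
     \sum_i \sum_j r i j * Kexp (u i) (w j) psi].
Proof.
move=> /psd_spectral [d [u [hd hu ->]]] /psd_spectral [e [w [he hw ->]]].
exists (fun i j => complex.Re (d i * e j)), u, w.
split=> // [i j|psi]; first by rewrite Re_ge0 ?mulr_ge0.
rewrite !hs_adj_sum tensmx_suml qform_sum Re_sum; apply: eq_bigr => i _.
rewrite tensmx_sumr qform_sum Re_sum; apply: eq_bigr => j _.
rewrite !hs_adjZ tensmxZl tensmxZr scalerA qformZ (@ReM_Im0 (d i * e j)) //.
by rewrite ger0_Im ?mulr_ge0.
Qed.

(* The trivial POVM gives [eps >= 0]; the POVMs {|phi><phi|, 1 - |phi><phi|}
   realise each [K_phi]. *)
Lemma eclm_qldp_rank_one eps : eclm_qldp (prod_chan EA EB) s eps <-> rank_one_qldp eps.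
Proof.
split=> [hq|[eps_ge0 h] OA OB MA MB [psdA _] [psdB _] psi psi' hpsi hpsi' T].
  split=> [|pa pb hpa hpb psi psi' hpsi hpsi'].
    have [psi hpsi] := exists_in_Hs N_gt0 s_le.
    have := hq _ _ _ _ (povm_trivial N) (povm_trivial N) psi psi hpsi hpsi [set (tt, tt)]%SET.
    have [[_ _ TPA] [_ _ TPB]] := (chA, chB).
    rewrite !big_set1 !lm_prob_prod_chan /= !hs_adj1 // tens1mx qform1; last exact: hpsi.1.
    change ((1 : R) <= expR eps * 1 -> 0 <= eps); rewrite mulr1 => h.
    by rewrite -[eps]expRK ln_ge0.
  have := hq _ _ _ _ (povm_proj hpa) (povm_proj hpb) psi psi' hpsi hpsi' [set (true, true)]%SET.
  by rewrite !big_set1 !lm_prob_prod_chan.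
rewrite mulr_sumr; apply: ler_sum => -[a b] _; rewrite !lm_prob_prod_chan /=.
have [r [u [w [r_ge0 hu hw e]]]] := Re_qform_hs_adj_tens (psdA a) (psdB b).
rewrite !e mulr_sumr; apply: ler_sum => i _; rewrite mulr_sumr; apply: ler_sum => j _.
by rewrite mulrCA ler_wpM2l ?h.
Qed.

Lemma eps_formula_le eps : (eps_formula EA EB s <= eps%:E)%E <-> rank_one_qldp eps.
Proof.
have J_le pa pb : (log_ratio (Jmax (K_phi EA EB pa pb) s) (Jmin (K_phi EA EB pa pb) s)
    <= eps%:E)%E <-> _ := log_ratio_le eps (Jmin_ge0 pa pb) (Jmin_le_Jmax pa pb).
split=> [h|[eps_ge0 h]].
  have J_le_eps pa pb : unit_vec pa -> unit_vec pb ->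
      Jmax (K_phi EA EB pa pb) s <= expR eps * Jmin (K_phi EA EB pa pb) s /\ 0 <= eps.
    move=> hpa hpb; apply/J_le/(le_trans _ h).
    by apply: ereal_sup_ubound; exists pa => //; exists pb.
  have hN := unit_vec_delta (Ordinal N_gt0).
  split; first by have [] := J_le_eps _ _ hN hN.
  by move=> pa pb hpa hpb; apply/Kexp_le_iff_Jmax_le; have [] := J_le_eps _ _ hpa hpb.
apply/ereal_supP => _ [pa hpa [pb hpb <-]].
by apply/J_le; split=> //; apply/Kexp_le_iff_Jmax_le/h.
Qed.

Lemma eps_formula_ge0 : (0%:E <= eps_formula EA EB s)%E.
Proof.
pose e0 : 'cV[C]_N := delta_mx (Ordinal N_gt0) 0.
apply: le_trans (log_ratio_ge0 (Jmin_ge0 e0 e0) (Jmin_le_Jmax e0 e0)) _.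
have e0_unit : unit_vec e0 by apply: unit_vec_delta.
by apply: ereal_sup_ubound; exists e0 => //; exists e0.
Qed.

Lemma eps_star_formula : eps_star (prod_chan EA EB) s = eps_formula EA EB s.
Proof.
apply/le_anti/andP; split; last first.
  by apply: le_ereal_inf_tmp => _ [eps heps <-]; apply/eps_formula_le/eclm_qldp_rank_one.
have := eps_formula_ge0; case hE: (eps_formula EA EB s) => [eps| |] //= _; last exact: leey.
apply: ereal_inf_lbound; exists eps => //.
by apply/eclm_qldp_rank_one/eps_formula_le; rewrite hE.
Qed.

End PrivacyParameter.

End Quantum.

Unset Implicit Arguments.

Theorem theorem2 (R : realType) (N : nat) (s : R)
  (EA EB : 'M[R[i]]_N -> 'M[R[i]]_N) :
  (0 < N)%N -> 0 <= s -> s <= ln (N%:R) ->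
  channel EA -> channel EB ->
  eps_star (prod_chan EA EB) s = eps_formula EA EB s /\
  (forall eps : R, eclm_qldp (prod_chan EA EB) s eps <->
                   (eps_formula EA EB s <= eps%:E)%E).
Proof.
move=> N_gt0 _ s_le chA chB; split; first exact: eps_star_formula.
move=> eps; apply: iff_trans (eclm_qldp_rank_one N_gt0 s_le chA chB eps) _.
exact: iff_sym (eps_formula_le N_gt0 s_le chA chB eps).
Qed.
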